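(* Let $\mu$ be the Möbius function of the Butcher--Connes--Kreimer Hopf algebra of rooted forests (the convolution inverse of $\zeta\equiv 1$ in its dual algebra). Then for every finite rooted forest $F$, \[ \mu(F)=\begin{cases}(-1)^n & \text{if $F$ consists of $n$ isolated root nodes (i.e. $n$ one-node trees)},\\ 0&\text{otherwise.}\end{cases} \]
   Context: Rooted forests are finite (possibly empty) disjoint unions of finite rooted trees (trees given by their nodes, each non-root node having a parent). The Butcher--Connes--Kreimer Hopf algebra is spanned by isomorphism classes of rooted forests with comultiplication $\Delta(F)=\sum_c P^c(F)\otimes R^c(F)$ over admissible cuts, where $P^c(F)$ is the pruned part and $R^c(F)$ the trunk; equivalently, the sum runs over subsets $U$ of nodes of $F$ closed under taking children, with $P^c(F)=U$ and $R^c(F)=F\setminus U$ carrying the induced forest structures. The dual algebra consists of functions $\varphi$ on isomorphism classes of rooted forests with convolution $(\varphi*\psi)(F)=\sum_{U}\varphi(U)\psi(F\setminus U)$ and unit $\delta(F)=1$ iff $F$ is empty. The zeta function is $\zeta\equiv1$ and the Möbius function is its convolution inverse. *)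

From HB Require Import structures.
From mathcomp Require Import all_boot all_order all_algebra.
From mathcomp Require Import finmap.
Set Implicit Arguments. Unset Strict Implicit. Unset Printing Implicit Defensive.
Import Order.TTheory GRing.Theory Num.Theory.
Local Open Scope fset_scope.
Local Open Scope ring_scope.

(* A (concrete) rooted forest: a finite set of nodes labelled by naturals and
   a parent function ([None] = the node is a root).  Only the values of [par]
   on [nodes] matter (see [wf_forest] and [forest_iso]). *)
Record forest := Forest { nodes : {fset nat}; par : nat -> option nat }.

Definition anc (F : forest) (k : nat) (x : nat) : option nat :=
  iter k (fun o => obind (par F) o) (Some x).

(* well-formedness: parents of nodes are nodes, and there are no cycles
   (every chain of parents ends at a root). *)
Definition wf_forest (F : forest) : Prop :=
  (forall x p, x \in nodes F -> par F x = Some p -> p \in nodes F) /\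
  (forall x, x \in nodes F -> exists k, anc F k x = None).

Definition forest_iso (F G : forest) : Prop :=
  exists f : nat -> nat,
    {in nodes F &, injective f} /\
    (forall y, y \in nodes G <-> exists2 x, x \in nodes F & f x = y) /\
    (forall x, x \in nodes F -> par G (f x) = omap f (par F x)).

Definition iso_invariant (phi : forest -> int) : Prop :=
  forall F G, wf_forest F -> wf_forest G -> forest_iso F G -> phi F = phi G.

Definition closed_children (F : forest) (U : {fset nat}) : bool :=
  all (fun x => (if par F x is Some p then p \in U else false) ==> (x \in U))
      (nodes F).

Definition restrict (F : forest) (U : {fset nat}) : forest :=
  Forest U (fun x => if x \in U then
                       (if par F x is Some p then (if p \in U then Some p else None)
                        else None)
                     else None).

(* convolution in the dual of the Butcher--Connes--Kreimer Hopf algebra: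
   (phi * psi)(F) = sum over children-closed U of phi(U) psi(F \ U) *)
Definition conv (phi psi : forest -> int) (F : forest) : int :=
  \sum_(U <- fpowerset (nodes F) | closed_children F U)
     phi (restrict F U) * psi (restrict F (nodes F `\` U)).

Definition zeta (F : forest) : int := 1.
Definition delta (F : forest) : int := (nodes F == fset0)%:R.

Definition is_moebius (mu : forest -> int) : Prop :=
  iso_invariant mu /\
  (forall F, wf_forest F -> conv mu zeta F = delta F /\ conv zeta mu F = delta F).

Definition all_isolated_roots (F : forest) : bool :=
  all (fun x => par F x == None) (nodes F).

From mathcomp Require Import all_boot all_order all_algebra.
From mathcomp Require Import finmap.
Import Order.TTheory GRing.Theory Num.Theory.
Local Open Scope fset_scope.
Local Open Scope ring_scope.
Set Implicit Arguments. Unset Strict Implicit. Unset Printing Implicit Defensive.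

(* In [moebius * zeta] a cut contributes exactly when its pruned part
   consists of leaves, so the sum is the alternating sum over the subsets of
   the leaves, which vanishes as soon as there is a leaf.  Dually, in
   [zeta * moebius] a cut contributes exactly when it contains every non-root,
   and the alternating sum over these cuts vanishes because every nonempty
   forest has a root.  Uniqueness holds because [phi * zeta] is triangular:
   the full cut contributes [phi F], every other cut a strictly smaller
   forest. *)

Section AlternatingSums.
Variable K : choiceType.
Implicit Types (A B S U : {fset K}) (a : K).

Lemma fsubU1set_D1 A B a : a \in B -> (a |` A `<=` B) = (A `\ a `<=` B).
Proof.
by move=> aB; rewrite fsubUset fsub1set aB fsubDset (fsetUidPr _ _ _) // fsub1set.
Qed.

Lemma fsubsetU1_D1 A B a : a \notin A -> (A `<=` a |` B) = (A `<=` B `\ a).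
Proof.
by move=> aA; rewrite fsubsetD1 aA andbT -fsubDset (fsetDidPl _ _ _) // fdisjointX1.
Qed.

Lemma cardfsU1_D1 A a : #|` a |` A| = (#|` A `\ a|).+1.
Proof. by rewrite cardfsU1 [#|` A|](cardfsD1 a); case: (a \in A). Qed.

Lemma cardfsDD1 S U a : a \in S -> #|` S `\` (U `\ a)| = (#|` S `\` (a |` U)|).+1.
Proof.
move=> aS; have -> : S `\` (U `\ a) = a |` (S `\` (a |` U)).
  by apply/fsetP => x; rewrite !inE; case: (x =P a) => [->|]; rewrite ?aS.
by rewrite cardfsU1 !inE eqxx.
Qed.

Lemma big_fpowerset_toggle (R : zmodType) S (h : {fset K} -> R) a : a \in S ->
  (forall U, U `<=` S -> h (a |` U) = - h (U `\ a)) ->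
  \sum_(U <- fpowerset S) h U = 0.
Proof.
move=> aS hN; rewrite (big_fsetID _ (fun U => a \in U)) /=.
set A := [fset U in fpowerset S | a \notin U].
have -> : [fset U in fpowerset S | a \in U] = [fset a |` U | U in A].
  apply/fsetP => W; apply/idP/imfsetP => [|[U]].
    rewrite !inE /= fpowersetE => /andP[WS aW]; exists (W `\ a); last first.
      by rewrite fsetD1K.
    by rewrite !inE /= fpowersetE eqxx /= andbT (fsubset_trans (fsubsetDl _ _) WS).
  rewrite /A !inE /= fpowersetE => /andP[US _] ->.
  have UaS : a |` U \in fpowerset S by rewrite fpowersetE fsubUset fsub1set aS US.
  by rewrite !inE eqxx andbT; exact: UaS.
rewrite (big_imfset _ _ h) /=; last first.
  move=> U V; rewrite !inE /= => /andP[_ aU] /andP[_ aV] eqUV.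
  by rewrite -(fsetU1K aU) -(fsetU1K aV) eqUV.
have -> : \sum_(U <- A) h (a |` U) = - \sum_(U <- A) h U.
  rewrite -sumrN; apply: eq_fbigr => U; rewrite !inE /= fpowersetE.
  by move=> /andP[US aU] _; rewrite hN // mem_fsetD1.
by rewrite addNr.
Qed.

Variable R : pzRingType.

Lemma sum_fpowerset_sub_sign S L a : a \in L -> L `<=` S ->
  \sum_(U <- fpowerset S) (if U `<=` L then (-1) ^+ #|` U| else 0 : R) = 0.
Proof.
move=> aL sLS; apply: (big_fpowerset_toggle (fsubsetP sLS a aL)) => U _.
by rewrite fsubU1set_D1 // cardfsU1_D1; case: ifP; rewrite ?exprS ?mulN1r ?oppr0.
Qed.

Lemma sum_fpowerset_sup_sign S N a : a \in S -> a \notin N ->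
  \sum_(U <- fpowerset S) (if N `<=` U then (-1) ^+ #|` S `\` U| else 0 : R) = 0.
Proof.
move=> aS aN; apply: (big_fpowerset_toggle aS) => U _.
by rewrite fsubsetU1_D1 // cardfsDD1 //; case: ifP; rewrite ?exprS ?mulN1r ?opprK ?oppr0.
Qed.

End AlternatingSums.

Definition moebius (F : forest) : int :=
  if all_isolated_roots F then (-1) ^+ #|` nodes F| else 0.

Definition is_leaf (F : forest) (x : nat) : bool :=
  ~~ has (fun c => par F c == Some x) (nodes F).

Definition leaves (F : forest) : {fset nat} := [fset x in nodes F | is_leaf F x].

Definition nonroots (F : forest) : {fset nat} := [fset x in nodes F | par F x != None].

Lemma in_leaves F x : (x \in leaves F) = (x \in nodes F) && is_leaf F x.
Proof. by rewrite inE. Qed.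

Lemma in_nonroots F x : (x \in nonroots F) = (x \in nodes F) && (par F x != None).
Proof. by rewrite inE. Qed.

Lemma iter_obind_None (T : Type) (f : T -> option T) k : iter k (obind f) None = None.
Proof. by elim: k => //= k ->. Qed.

Lemma anc_None_monotone F k m x : (k <= m)%N -> anc F k x = None -> anc F m x = None.
Proof. by move=> /subnK <- akx; rewrite /anc iterD -/(anc F k x) akx iter_obind_None. Qed.

Lemma wf_anc_bound F : wf_forest F ->
  exists K, forall x, x \in nodes F -> anc F K x = None.
Proof.
case=> _ ancF.
have bound (s : seq nat) : {subset s <= nodes F} ->
    exists K, forall x, x \in s -> anc F K x = None.
  elim: s => [|y s IHs] sub; first by exists 0%N.
  have [K HK] := IHs (fun z zs => sub z (mem_behead (s := y :: s) zs)).
  have [k Hk] := ancF y (sub y (mem_head y s)).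
  exists (maxn k K) => x; rewrite inE => /predU1P[->|xs].
    exact: anc_None_monotone (leq_maxl k K) Hk.
  exact: anc_None_monotone (leq_maxr k K) (HK x xs).
exact: bound (nodes F) (fun x xF => xF).
Qed.

Lemma leaf_exists F : wf_forest F -> nodes F != fset0 ->
  exists2 x, x \in nodes F & is_leaf F x.
Proof.
move=> wfF /fset0Pn[x0 x0F].
have [/hasP[x xF x_leaf]|/hasPn no_leaf] := boolP (has (is_leaf F) (nodes F)).
  by exists x.
have descendant k x : x \in nodes F -> exists2 y, y \in nodes F & anc F k y = Some x.
  elim: k x => [|k IHk] x xF; first by exists x.
  have /hasP[c cF /eqP pc] := negbNE (no_leaf x xF).
  have [y yF aky] := IHk c cF.
  by exists y; rewrite // /anc iterS -/(anc F k y) aky.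
have [K HK] := wf_anc_bound wfF.
by have [y yF] := descendant K x0 x0F; rewrite HK.
Qed.

Lemma root_exists F : wf_forest F -> nodes F != fset0 ->
  exists2 r, r \in nodes F & par F r = None.
Proof.
move=> [parF ancF] /fset0Pn[x xF]; have [k] := ancF x xF.
elim: k x xF => [|k IHk] x xF //; rewrite /anc iterSr /=.
case pxE: (par F x) => [p|]; last by exists x.
exact: IHk (parF x p xF pxE).
Qed.

Lemma closed_isolated_prunedE F U : U `<=` nodes F ->
  closed_children F U && all_isolated_roots (restrict F U) = (U `<=` leaves F).
Proof.
move=> sUF; apply/andP/fsubsetP => [[closedU isoU] x xU | sUL].
  rewrite in_leaves (fsubsetP sUF x xU) /=; apply/hasPn => c cF.
  apply/negP => /eqP pc; have := allP closedU c cF; rewrite pc xU /= => cU.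
  by have := allP isoU c cU; rewrite /= cU pc xU.
have childless x c : x \in U -> c \in nodes F -> par F c != Some x.
  by move=> /sUL; rewrite in_leaves => /andP[_ /hasPn]; apply.
split; apply/allP.
  move=> x xF; case pxE: (par F x) => [p|] //=; apply/implyP => pU.
  by have := childless p x pU xF; rewrite pxE eqxx.
move=> x xU /=; rewrite xU; case pxE: (par F x) => [p|] //; case: ifP => // pU.
by have := childless p x pU (fsubsetP sUF x xU); rewrite pxE eqxx.
Qed.

Lemma closed_isolated_trunkE F U : wf_forest F -> U `<=` nodes F ->
  closed_children F U && all_isolated_roots (restrict F (nodes F `\` U))
  = (nonroots F `<=` U).
Proof.
move=> [parF _] sUF; apply/andP/fsubsetP => [[closedU isoD] x | sNU].
  rewrite in_nonroots => /andP[xF]; case pxE: (par F x) => [p|] // _.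
  apply/negPn/negP => xU; have xD : x \in nodes F `\` U by rewrite inE xU xF.
  have := allP isoD x xD; rewrite /= xD pxE inE (parF x p xF pxE) andbT.
  case: ifPn => // /negPn pU _.
  by have := allP closedU x xF; rewrite pxE pU (negbTE xU).
have rootD x : x \in nodes F `\` U -> par F x = None.
  rewrite inE => /andP[xU xF]; apply/eqP/negPn/negP => pxN.
  by have := sNU x; rewrite in_nonroots xF pxN (negbTE xU) => /(_ isT).
split; apply/allP => x.
  move=> xF; case pxE: (par F x) => [p|] //=; apply/implyP => _.
  by apply: sNU; rewrite in_nonroots xF pxE.
by move=> xD /=; rewrite xD rootD.
Qed.

Lemma conv_moebius_zetaE F : conv moebius zeta F =
  \sum_(U <- fpowerset (nodes F)) (if U `<=` leaves F then (-1) ^+ #|` U| else 0).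
Proof.
rewrite /conv big_mkcond; apply: eq_fbigr => U; rewrite fpowersetE => sUF _.
rewrite -(closed_isolated_prunedE sUF) /moebius /zeta mulr1.
by case: closed_children; case: all_isolated_roots.
Qed.

Lemma conv_zeta_moebiusE F : wf_forest F -> conv zeta moebius F =
  \sum_(U <- fpowerset (nodes F))
     (if nonroots F `<=` U then (-1) ^+ #|` nodes F `\` U| else 0).
Proof.
move=> wfF; rewrite /conv big_mkcond; apply: eq_fbigr => U; rewrite fpowersetE => sUF _.
rewrite -(closed_isolated_trunkE wfF sUF) /moebius /zeta mul1r.
by case: closed_children; case: all_isolated_roots.
Qed.

Lemma conv_moebius_zeta F : wf_forest F -> conv moebius zeta F = delta F.
Proof.
move=> wfF; rewrite conv_moebius_zetaE /delta.
have [E|neF] := eqVneq (nodes F) fset0.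
  by rewrite E fpowerset0 big_seq_fset1 fsub0set.
have [l lF l_leaf] := leaf_exists wfF neF.
have lL : l \in leaves F by rewrite in_leaves lF.
by rewrite (sum_fpowerset_sub_sign _ lL) ?fset_sub.
Qed.

Lemma conv_zeta_moebius F : wf_forest F -> conv zeta moebius F = delta F.
Proof.
move=> wfF; rewrite conv_zeta_moebiusE // /delta.
have [E|neF] := eqVneq (nodes F) fset0.
  have N0 : nonroots F `<=` fset0 by rewrite -E fset_sub.
  by rewrite E fpowerset0 big_seq_fset1 N0 fsetD0.
have [r rF pr] := root_exists wfF neF.
have rN : r \notin nonroots F by rewrite in_nonroots pr eqxx andbF.
by rewrite (sum_fpowerset_sup_sign _ rF rN).
Qed.

Lemma wf_restrict F U : wf_forest F -> U `<=` nodes F -> wf_forest (restrict F U).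
Proof.
move=> [_ ancF] sUF; split=> [x p /= xU|x /= xU].
  by rewrite xU; case: (par F x) => [q|] //; case: ifP => // qU [<-].
have [k akx] := ancF x (fsubsetP sUF x xU); exists k.
have anc_restrict n : anc (restrict F U) n x = None \/
    anc (restrict F U) n x = anc F n x /\ (forall y, anc F n x = Some y -> y \in U).
  elim: n => [|n [IHn|[IHn inU]]]; first by right; split=> // y [<-].
    by left; rewrite /anc iterS -/(anc _ n x) IHn.
  rewrite /anc !iterS -!/(anc _ n x) IHn.
  case anx: (anc F n x) => [y|] /=; last by left.
  rewrite (inU y anx); case: (par F y) => [p|]; last by left.
  by case: ifP => pU; [right; split=> // z [<-] | left].
by case: (anc_restrict k) => [|[-> _]].
Qed.

Lemma forest_iso_restrict_nodes F : wf_forest F -> forest_iso (restrict F (nodes F)) F.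
Proof.
move=> [parF _]; exists id; split=> [x y _ _ //|]; split=> [y|x /= xF].
  by split=> [yF|[x xF <-]] //; exists y.
by rewrite xF; case pxE: (par F x) => [p|] //=; rewrite (parF x p xF pxE).
Qed.

Lemma iso_invariant_restrict_nodes phi F : iso_invariant phi -> wf_forest F ->
  phi (restrict F (nodes F)) = phi F.
Proof.
move=> iso_phi wfF; have wfFF := wf_restrict wfF (fsubset_refl _).
exact: iso_phi wfFF wfF (forest_iso_restrict_nodes wfF).
Qed.

Lemma moebius_iso_invariant : iso_invariant moebius.
Proof.
move=> F G _ _ [f [f_inj [nodesG parG]]]; rewrite /moebius /all_isolated_roots.
have -> : nodes G = [fset f x | x in nodes F].
  by apply/fsetP => y; apply/idP/imfsetP => [/nodesG[x xF <-]|[x xF ->]];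
    [exists x | apply/nodesG; exists x].
rewrite card_in_imfset //; congr (if _ then _ else _).
apply/allP/allP => [isoF _ /imfsetP[x xF ->]|isoG x xF].
  by rewrite /= parG // (eqP (isoF x xF)).
have fxG : f x \in [fset f x | x in nodes F] by apply/imfsetP; exists x.
by have := isoG (f x) fxG; rewrite /= parG //; case: (par F x).
Qed.

Lemma conv_zeta_split phi F : conv phi zeta F = phi (restrict F (nodes F)) +
  \sum_(U <- fpowerset (nodes F) `\ nodes F | closed_children F U) phi (restrict F U).
Proof.
have closedF : closed_children F (nodes F) by apply/allP => x xF; apply/implyP.
rewrite /conv /zeta; under eq_bigr do rewrite mulr1.
by rewrite big_mkcond (big_fsetD1 (nodes F)) ?fpowersetE //= closedF -big_mkcond.
Qed.

Lemma conv_zeta_inj phi psi : iso_invariant phi -> iso_invariant psi ->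
  (forall F, wf_forest F -> conv phi zeta F = conv psi zeta F) ->
  forall F, wf_forest F -> phi F = psi F.
Proof.
move=> iso_phi iso_psi eq_conv F; have [n] := ubnP #|` nodes F|.
elim: n F => // n IHn F ltFn wfF.
have := eq_conv F wfF; rewrite !conv_zeta_split !iso_invariant_restrict_nodes //.
suff -> : \sum_(U <- fpowerset (nodes F) `\ nodes F | closed_children F U)
            phi (restrict F U) =
          \sum_(U <- fpowerset (nodes F) `\ nodes F | closed_children F U)
            psi (restrict F U) by move/addIr.
apply: eq_fbigr => U; rewrite in_fsetD1 fpowersetE => /andP[neUF sUF] _.
apply: IHn; last exact: wf_restrict.
by rewrite -ltnS (leq_trans _ ltFn) // ltnS fproper_ltn_card // fproperEneq neUF sUF.
Qed.

Theorem corollary3p6 :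
  (exists mu : forest -> int, is_moebius mu) /\
  (forall mu : forest -> int, is_moebius mu ->
     forall F : forest, wf_forest F ->
       mu F = (if all_isolated_roots F then (-1) ^+ #|` nodes F| else 0)).
Proof.
have moebiusP : is_moebius moebius.
  split=> [|F wfF]; first exact: moebius_iso_invariant.
  by rewrite conv_moebius_zeta ?conv_zeta_moebius.
split=> [|mu [iso_mu mu_inv] F wfF]; first by exists moebius.
apply: (conv_zeta_inj iso_mu moebius_iso_invariant _ wfF) => G wfG.
by rewrite (mu_inv G wfG).1 conv_moebius_zeta.
Qed.
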